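(* Let $R$ be a suitable ring, and let $x_1,x_2,x_3\in R$ satisfy $x_1+x_2+x_3=1$, where $x_1$ is an idempotent. Then there exist pairwise orthogonal idempotents $e_1\in Rx_1$, $e_2\in Rx_2$, $e_3\in Rx_3$ such that $e_1+e_2+e_3=1$ and $x_1\sim e_1$.
   Context: A ring $R$ (associative with $1$) is suitable if whenever $x+y=1$ in $R$ there are orthogonal idempotents $e\in Rx$ and $f\in Ry$ with $e+f=1$. For idempotents $e,e'\in R$, write $e\sim e'$ ($e$ and $e'$ are left strongly isomorphic) if $e'e=e'$ and $ee'=e$. *)

From mathcomp Require Import all_boot all_algebra.
Set Implicit Arguments. Unset Strict Implicit. Unset Printing Implicit Defensive.
Import GRing.Theory.
Local Open Scope ring_scope.

Definition idem (R : pzRingType) (e : R) : Prop := e * e = e.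

Definition in_left_ideal (R : pzRingType) (a x : R) : Prop := exists r : R, a = r * x.

Definition orth (R : pzRingType) (e f : R) : Prop := e * f = 0 /\ f * e = 0.

Definition suitable (R : pzRingType) : Prop :=
  forall x y : R, x + y = 1 ->
    exists e f : R, [/\ idem e /\ idem f, in_left_ideal e x, in_left_ideal f y,
                       orth e f & e + f = 1].

Definition lsiso (R : pzRingType) (e e' : R) : Prop := e' * e = e' /\ e * e' = e.

From mathcomp Require Import all_boot all_algebra.
Set Implicit Arguments. Unset Strict Implicit. Unset Printing Implicit Defensive.
Import GRing.Theory.
Local Open Scope ring_scope.

(* Put q := 1 - x1, an idempotent with x2 + x3 = q.  Suitability applied to
   q x2 q + (1 - q x2 q) = 1 splits q into orthogonal idempotents f + g of the
   corner ring qRq, with f in R x2 q and g in R x3 q.  Writing f = h q and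
   g = k q with h in R x2, k in R x3, the elements e2 := f h and e3 := g k are
   orthogonal idempotents in R x2 and R x3 whose sum G satisfies G q = q and
   q G = G.  Then e1 := 1 - G completes them, and G q = q, x1 G = 0 give
   x1 ~ e1. *)

Section SuitableCorner.

Variable R : pzRingType.
Implicit Types e f g h k p q G : R.

Lemma idem1B e : idem e -> idem (1 - e).
Proof. by move=> ee; rewrite /idem mulrBl !mulrBr !mul1r mulr1 ee subrr subr0. Qed.

Lemma idem_subr q f :
  idem q -> idem f -> q * f = f -> f * q = f -> idem (q - f) /\ orth f (q - f).
Proof.
move=> qq ff qf fq; split; last by split; rewrite ?mulrBr ?mulrBl ff ?fq ?qf subrr.
by rewrite /idem mulrBl !mulrBr qq ff qf fq subrr subr0.
Qed.

Lemma orth_idem_complement e f :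
  idem e -> idem f -> orth e f ->
  [/\ idem (1 - (e + f)), orth (1 - (e + f)) e & orth (1 - (e + f)) f].
Proof.
move=> ee ff [ef fe].
have eff : idem (e + f) by rewrite /idem mulrDl !mulrDr ee ff ef fe addr0 add0r.
split; first exact: idem1B.
- by split; rewrite ?mulrBr ?mulrBl ?mulrDr ?mulrDl ?mulr1 ?mul1r ee ?ef ?fe
    ?addr0 subrr.
- by split; rewrite ?mulrBr ?mulrBl ?mulrDr ?mulrDl ?mulr1 ?mul1r ff ?ef ?fe
    ?add0r subrr.
Qed.

Lemma suitable_corner q a b :
  suitable R -> idem q -> q * a * q + q * b * q = q ->
  exists f g u v, [/\ idem f /\ idem g, orth f g, f + g = q,
                      u * a * q = f & v * b * q = g].
Proof.
move=> suitR qq sum_q.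
have sum1 : q * a * q + (1 - q * a * q) = 1 by rewrite addrC subrK.
have [e [e' [[ee _] [r er] [s es] _ ee']]] := suitR _ _ sum1.
have eqe : e * q = e by rewrite er -!mulrA qq.
have ff : idem (q * e) by rewrite /idem mulrA -(mulrA q e q) eqe -mulrA ee.
have [gg fg] : idem (q - q * e) /\ orth (q * e) (q - q * e).
  by apply: idem_subr; rewrite // ?mulrA ?qq // -mulrA eqe.
have e'E : e' = 1 - e by rewrite -ee' (addrC e) addrK.
exists (q * e), (q - q * e), (q * r * q), (q * s * q); split => //.
- by rewrite addrC subrK.
- by rewrite er !mulrA.
have qbq : q * b * q = (1 - q * a * q) * q.
  rewrite mulrBl mul1r -(mulrA (q * a) q q) qq.
  by apply: (addrI (q * a * q)); rewrite sum_q addrC subrK.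
have -> : q * s * q * b * q = q * (s * (1 - q * a * q)) * q.
  by rewrite -2!(mulrA (q * s)) qbq !mulrA.
by rewrite -es e'E mulrBr mulr1 mulrBl qq -mulrA eqe.
Qed.

Lemma orth_idem_lift f g h k :
  idem f -> idem g -> orth f g -> h * (f + g) = f -> k * (f + g) = g ->
  [/\ idem (f * h), idem (g * k), orth (f * h) (g * k),
      (f * h + g * k) * (f + g) = f + g & (f + g) * (f * h + g * k) = f * h + g * k].
Proof.
move=> ff gg [fg gf] hq kq.
have fgf : (f + g) * f = f by rewrite mulrDl ff gf addr0.
have fgg : (f + g) * g = g by rewrite mulrDl gg fg add0r.
have hf : h * f = f by rewrite -{1}fgf mulrA hq ff.
have hg : h * g = 0 by rewrite -fgg mulrA hq fg.
have kg : k * g = g by rewrite -{1}fgg mulrA kq gg.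
have kf : k * f = 0 by rewrite -fgf mulrA kq gf.
split.
- by rewrite /idem mulrA -(mulrA f h f) hf ff.
- by rewrite /idem mulrA -(mulrA g k g) kg gg.
- by split; rewrite mulrA; [rewrite -(mulrA f h g) hg | rewrite -(mulrA g k f) kf];
    rewrite mulr0 mul0r.
- by rewrite mulrDl -!mulrA hq kq ff gg.
by rewrite mulrDl !mulrDr !mulrA ff gg fg gf !mul0r addr0 add0r.
Qed.

Lemma lsiso_1B p G : G * (1 - p) = 1 - p -> p * G = 0 -> lsiso p (1 - G).
Proof.
move=> Gq pG; split; last by rewrite mulrBr mulr1 pG subr0.
have Gp : G * p = G - (1 - p) by rewrite -Gq -{2}[G]mulr1 -mulrBr opprB addrC subrK.
by rewrite mulrBl mul1r Gp opprB addrA (addrC p) subrK.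
Qed.

End SuitableCorner.

Theorem lemma2 (R : pzRingType) (x1 x2 x3 : R) :
  suitable R -> x1 + x2 + x3 = 1 -> idem x1 ->
  exists e1 e2 e3 : R,
    [/\ idem e1 /\ idem e2 /\ idem e3,
        in_left_ideal e1 x1 /\ in_left_ideal e2 x2 /\ in_left_ideal e3 x3,
        orth e1 e2 /\ orth e1 e3 /\ orth e2 e3,
        e1 + e2 + e3 = 1 & lsiso x1 e1].
Proof.
move=> suitR sum1 pp; set q := 1 - x1.
have qq : idem q := idem1B pp.
have x23 : x2 + x3 = q by rewrite /q -sum1 -(addrA x1) (addrC x1) addrK.
have qxq : q * x2 * q + q * x3 * q = q by rewrite -mulrDl -mulrDr x23 !qq.
have [f [g [u [v [[ff gg] fg fgq fE gE]]]]] := suitable_corner suitR qq qxq.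
have uq : u * x2 * (f + g) = f by rewrite fgq.
have vq : v * x3 * (f + g) = g by rewrite fgq.
have [e2e2 e3e3 o23 Gq qG] := orth_idem_lift ff gg fg uq vq.
set e2 := f * (u * x2); set e3 := g * (v * x3).
have [e1e1 o12 o13] := orth_idem_complement e2e2 e3e3 o23.
have [e1p pe1] : lsiso x1 (1 - (e2 + e3)).
  apply: lsiso_1B; first by rewrite -/q -fgq.
  by rewrite -qG fgq mulrA /q mulrBr mulr1 pp subrr mul0r.
exists (1 - (e2 + e3)), e2, e3; split => //.
- by split; [exists (1 - (e2 + e3)) | split; [exists (f * u) | exists (g * v)]];
    rewrite ?e1p /e2 /e3 ?mulrA.
- by rewrite -addrA subrK.
Qed.
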